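(* For a Legendrian curve $\gamma$, \begin{equation} \lim_{\Delta s,\,\Delta t\to 0} \frac{\mathbb{X}(\gamma(s),\gamma(t),\gamma(s+\Delta s),\gamma(t+\Delta t))}{(\Delta s)^2(\Delta t)^2} =\left(\frac{|\gamma'(s)|\,|\gamma'(t)|}{\|\gamma(s)^{-1}\gamma(t)\|_{\mathcal{H}}^2}\right)^2 \end{equation} holds for $s\neq t$.
   Context: $\mathcal{H}=\mathbb{C}\times\mathbb{R}$ is the 3-dimensional Heisenberg group with coordinates $(z,u)=(x,y,u)$, group law $(z,u)\cdot(z',u')=(z+z',u+u'-\tfrac{1}{2}\Im(z\overline{z'}))$, horizontal distribution spanned by $X=\partial_x-\tfrac12 y\,\partial_u$, $Y=\partial_y+\tfrac12 x\,\partial_u$ (orthonormal, norm $|\cdot|$); a curve is Legendrian if its velocity is horizontal. The Korányi norm is $\|(x,y,u)\|_{\mathcal{H}}=\sqrt[4]{(x^2+y^2)^2+16u^2}$. For $p=(z,u)$ set $A(p)=|z|^2-4iu$, so $\|p\|_{\mathcal{H}}=|A(p)|^{1/2}$. The complex cross ratio (Korányi–Reimann) is $\mathbb{X}(p_1,p_2,p_3,p_4)=\dfrac{A(p_3^{-1}p_1)A(p_4^{-1}p_2)}{A(p_4^{-1}p_1)A(p_3^{-1}p_2)}$. *)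

From Stdlib Require Import Reals.
From Coquelicot Require Import Coquelicot.
Open Scope R_scope.

(* Points of the Heisenberg group H = C x R, encoded as ((x, y), u). *)
Definition Hpt : Type := ((R * R) * R)%type.
Definition hx (p : Hpt) : R := fst (fst p).
Definition hy (p : Hpt) : R := snd (fst p).
Definition hu (p : Hpt) : R := snd p.

(* Group law (z,u).(z',u') = (z+z', u+u' - 1/2 Im(z conj z')),
   with Im(z conj z') = y x' - x y'. *)
Definition hmul (p q : Hpt) : Hpt :=
  ((hx p + hx q, hy p + hy q),
   hu p + hu q - / 2 * (hy p * hx q - hx p * hy q)).
Definition hinv (p : Hpt) : Hpt := ((- hx p, - hy p), - hu p).

Definition Afun (p : Hpt) : C := (hx p ^ 2 + hy p ^ 2, - (4 * hu p)).

Definition koranyi (p : Hpt) : R :=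
  sqrt (sqrt ((hx p ^ 2 + hy p ^ 2) ^ 2 + 16 * hu p ^ 2)).

Definition cross_ratio (p1 p2 p3 p4 : Hpt) : C :=
  Cdiv (Cmult (Afun (hmul (hinv p3) p1)) (Afun (hmul (hinv p4) p2)))
       (Cmult (Afun (hmul (hinv p4) p1)) (Afun (hmul (hinv p3) p2))).

Definition in_interval (a b : Rbar) (t : R) : Prop := Rbar_lt a t /\ Rbar_lt t b.

Definition C1_curve (a b : Rbar) (gamma : R -> Hpt) : Prop :=
  forall t, in_interval a b t ->
    ex_derive (fun r => hx (gamma r)) t /\ continuous (Derive (fun r => hx (gamma r))) t /\
    ex_derive (fun r => hy (gamma r)) t /\ continuous (Derive (fun r => hy (gamma r))) t /\
    ex_derive (fun r => hu (gamma r)) t /\ continuous (Derive (fun r => hu (gamma r))) t.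

(* Legendrian: the velocity is horizontal, i.e. lies in span{X, Y} with
   X = d_x - y/2 d_u, Y = d_y + x/2 d_u; equivalently u' = (x y' - y x')/2. *)
Definition legendrian (a b : Rbar) (gamma : R -> Hpt) : Prop :=
  C1_curve a b gamma /\
  forall t, in_interval a b t ->
    Derive (fun r => hu (gamma r)) t =
      / 2 * (hx (gamma t) * Derive (fun r => hy (gamma r)) t
             - hy (gamma t) * Derive (fun r => hx (gamma r)) t).

(* |gamma'(t)|: the norm of the horizontal velocity x' X + y' Y (X, Y orthonormal). *)
Definition hspeed (gamma : R -> Hpt) (t : R) : R :=
  sqrt (Derive (fun r => hx (gamma r)) t ^ 2 + Derive (fun r => hy (gamma r)) t ^ 2).

From Stdlib Require Import Reals Lra.
From Coquelicot Require Import Coquelicot.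
Open Scope R_scope.

(* Write A_s(h) = A(gamma(s+h)^-1 gamma(s)).  Its real part is |z(s+h) - z(s)|^2, so
   Re A_s(h) / h^2 tends to |gamma'(s)|^2.  Its imaginary part is -4 W(h), where W(h) is
   the vertical coordinate of gamma(s+h)^-1 gamma(s); for a Legendrian curve
   W'(c) = -(y'(s+c) (x(s+c) - x(s)) - x'(s+c) (y(s+c) - y(s)))/2 = o(c), hence
   W(h) = o(h^2) by the mean value theorem and A_s(h)/h^2 -> |gamma'(s)|^2.  Dividing the
   cross ratio by (ds dt)^2 leaves A_s(ds)/ds^2 times A_t(dt)/dt^2 over a denominator
   tending to A(q^-1 p) A(p^-1 q) = |A(p^-1 q)|^2 = ||p^-1 q||^4, because A(g^-1) is the
   complex conjugate of A(g). *)

Section Limits.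
Context {T : Type} {F : (T -> Prop) -> Prop} {FF : Filter F}.

Lemma lim_Rplus (f g : T -> R) (a b : R) :
  filterlim f F (locally a) -> filterlim g F (locally b) ->
  filterlim (fun x => f x + g x) F (locally (a + b)).
Proof.
  intros Hf Hg. eapply filterlim_comp_2; [exact Hf | exact Hg |].
  exact (@filterlim_plus R_AbsRing R_NormedModule a b).
Qed.

Lemma lim_Rmult (f g : T -> R) (a b : R) :
  filterlim f F (locally a) -> filterlim g F (locally b) ->
  filterlim (fun x => f x * g x) F (locally (a * b)).
Proof.
  intros Hf Hg. eapply filterlim_comp_2; [exact Hf | exact Hg |].
  exact (@filterlim_mult R_AbsRing a b).
Qed.

Lemma lim_Rpow (f : T -> R) (a : R) (n : nat) :
  filterlim f F (locally a) -> filterlim (fun x => f x ^ n) F (locally (a ^ n)).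
Proof.
  intros Hf. induction n as [| n IH]; simpl.
  - apply filterlim_const.
  - now apply lim_Rmult.
Qed.

Lemma lim_Ropp (f : T -> R) (a : R) :
  filterlim f F (locally a) -> filterlim (fun x => - f x) F (locally (- a)).
Proof.
  intros Hf. eapply filterlim_comp; [exact Hf |].
  exact (@filterlim_opp R_AbsRing R_NormedModule a).
Qed.

Lemma lim_Rinv (f : T -> R) (a : R) : a <> 0 ->
  filterlim f F (locally a) -> filterlim (fun x => / f x) F (locally (/ a)).
Proof.
  intros Ha Hf. eapply filterlim_comp; [exact Hf |].
  apply (filterlim_Rbar_inv (Finite a)). intros E. apply Ha. now injection E.
Qed.

Lemma lim_C_parts (f : T -> C) (z : C) :
  filterlim (fun x => Re (f x)) F (locally (Re z)) ->
  filterlim (fun x => Im (f x)) F (locally (Im z)) ->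
  filterlim f F (locally z).
Proof.
  intros Hre Him. apply filterlim_locally. intros eps.
  generalize (filter_and _ _ (proj1 (filterlim_locally _ _) Hre eps)
                              (proj1 (filterlim_locally _ _) Him eps)).
  apply filter_imp. intros x [H1 H2]. now split.
Qed.

Lemma lim_Re (f : T -> C) (z : C) :
  filterlim f F (locally z) -> filterlim (fun x => Re (f x)) F (locally (Re z)).
Proof.
  intros Hf. apply filterlim_locally. intros eps.
  generalize (proj1 (filterlim_locally _ _) Hf eps).
  apply filter_imp. now intros x [H1 _].
Qed.

Lemma lim_Im (f : T -> C) (z : C) :
  filterlim f F (locally z) -> filterlim (fun x => Im (f x)) F (locally (Im z)).
Proof.
  intros Hf. apply filterlim_locally. intros eps.
  generalize (proj1 (filterlim_locally _ _) Hf eps).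
  apply filter_imp. now intros x [_ H2].
Qed.

Lemma lim_Cmult (f g : T -> C) (a b : C) :
  filterlim f F (locally a) -> filterlim g F (locally b) ->
  filterlim (fun x => Cmult (f x) (g x)) F (locally (Cmult a b)).
Proof.
  intros Hf Hg.
  pose proof (lim_Re f a Hf). pose proof (lim_Im f a Hf).
  pose proof (lim_Re g b Hg). pose proof (lim_Im g b Hg).
  apply lim_C_parts; simpl.
  - apply lim_Rplus; [apply lim_Rmult | apply lim_Ropp, lim_Rmult]; assumption.
  - apply lim_Rplus; apply lim_Rmult; assumption.
Qed.

Lemma lim_Cinv (f : T -> C) (a : C) : a <> 0%C ->
  filterlim f F (locally a) -> filterlim (fun x => Cinv (f x)) F (locally (Cinv a)).
Proof.
  intros Ha Hf.
  pose proof (lim_Re f a Hf) as Rf. pose proof (lim_Im f a Hf) as If.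
  assert (Hn : Re a ^ 2 + Im a ^ 2 <> 0).
  { rewrite <- Cmod2_alt. apply pow_nonzero. intros E. now apply Ha, Cmod_eq_0. }
  assert (Hd : filterlim (fun x => / (Re (f x) ^ 2 + Im (f x) ^ 2)) F
                 (locally (/ (Re a ^ 2 + Im a ^ 2)))).
  { apply lim_Rinv; [exact Hn |]. simpl.
    apply lim_Rplus; apply lim_Rmult; try apply lim_Rmult; try apply filterlim_const;
      assumption. }
  apply lim_C_parts; simpl.
  - now apply lim_Rmult.
  - now apply lim_Rmult; [apply lim_Ropp |].
Qed.

End Limits.

Lemma in_interval_locally (a b : Rbar) (s : R) :
  in_interval a b s -> locally s (in_interval a b).
Proof.
  intros [Ha Hb]. exact (filter_and _ _ (open_Rbar_gt' s a Ha) (open_Rbar_lt' s b Hb)).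
Qed.

Lemma is_derive_diff_quotient (f : R -> R) (s l : R) : is_derive f s l ->
  filterlim (fun h => (f (s + h) - f s) / h) (within (fun h => h <> 0) (locally 0))
    (locally l).
Proof.
  intros Hf. apply is_derive_Reals in Hf.
  apply filterlim_locally. intros eps.
  destruct (Hf eps (cond_pos eps)) as [d Hd].
  exists d. intros h Hh Hnz. apply Hd; [exact Hnz |].
  change (Rabs (h - 0) < d) in Hh. now rewrite Rminus_0_r in Hh.
Qed.

Lemma little_o_sq_of_deriv (W W' : R -> R) :
  W 0 = 0 -> W' 0 = 0 ->
  locally 0 (fun c => is_derive W c (W' c)) ->
  filterlim (fun c => W' c / c) (within (fun c => c <> 0) (locally 0)) (locally 0) ->
  filterlim (fun h => W h / h ^ 2) (within (fun h => h <> 0) (locally 0)) (locally 0).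
Proof.
  intros W0 W'0 [d1 HW] Hlim. apply filterlim_locally. intros eps.
  destruct (proj1 (filterlim_locally _ _) Hlim (pos_div_2 eps)) as [d2 Hd2].
  assert (Hd : 0 < Rmin d1 d2 / 2) by (destruct d1, d2; apply Rmin_case; simpl; lra).
  exists (mkposreal _ Hd). intros h Hh Hnz.
  change (Rabs (h - 0) < Rmin d1 d2 / 2) in Hh. rewrite Rminus_0_r in Hh.
  assert (Hd12 : forall c, Rabs c <= Rabs h -> Rabs (c - 0) < d1 /\ Rabs (c - 0) < d2).
  { intros c Hc. rewrite Rminus_0_r. pose proof (Rmin_l d1 d2). pose proof (Rmin_r d1 d2).
    split; lra. }
  destruct (MVT_cor4 W W' 0 (Rabs h)) with (b := h) as [c [Hmvt Hc]].
  - intros c Hc. apply HW. apply Hd12. now rewrite Rminus_0_r in Hc.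
  - now rewrite Rminus_0_r; apply Rle_refl.
  rewrite W0, !Rminus_0_r in Hmvt. rewrite !Rminus_0_r in Hc.
  assert (Hbound : Rabs (W' c) <= eps / 2 * Rabs h).
  { destruct (Req_dec c 0) as [-> | Hc0].
    - rewrite W'0, Rabs_R0. pose proof (cond_pos eps). pose proof (Rabs_pos h). nra.
    - specialize (Hd2 c (proj2 (Hd12 c Hc)) Hc0).
      change (Rabs (W' c / c - 0) < eps / 2) in Hd2. rewrite Rminus_0_r in Hd2.
      replace (W' c) with (W' c / c * c) by (field; exact Hc0).
      rewrite Rabs_mult. apply Rmult_le_compat; auto using Rabs_pos, Rlt_le. }
  change (Rabs (W h / h ^ 2 - 0) < eps).
  assert (Hh0 : 0 < Rabs h) by now apply Rabs_pos_lt.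
  rewrite Rminus_0_r, Hmvt, Rabs_div, Rabs_mult, <- RPow_abs by (now apply pow_nonzero).
  replace (Rabs (W' c) * Rabs h / Rabs h ^ 2) with (Rabs (W' c) / Rabs h) by (field; lra).
  apply Rle_lt_trans with (eps / 2); [| pose proof (cond_pos eps); lra].
  apply Rle_div_l; assumption.
Qed.

Lemma filterlim_shift (s : R) : filterlim (fun c => s + c) (locally 0) (locally s).
Proof.
  pose proof (lim_Rplus (fun _ => s) (fun c => c) s 0 (filterlim_const s) (filterlim_id _ _)) as H.
  now rewrite Rplus_0_r in H.
Qed.

Section LegendrianGerm.

Variables (a b : Rbar) (gamma : R -> Hpt) (s : R).
Hypothesis gamma_legendrian : legendrian a b gamma.
Hypothesis s_in : in_interval a b s.

Let x (r : R) : R := hx (gamma r).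
Let y (r : R) : R := hy (gamma r).
Let u (r : R) : R := hu (gamma r).

Let vertical_gap (h : R) : R := hu (hmul (hinv (gamma (s + h))) (gamma s)).

Let vertical_gap' (c : R) : R :=
  - / 2 * (Derive y (s + c) * (x (s + c) - x s) - Derive x (s + c) * (y (s + c) - y s)).

Lemma legendrian_near :
  locally s (fun r => ex_derive x r /\ ex_derive y r /\ ex_derive u r /\
                      Derive u r = / 2 * (x r * Derive y r - y r * Derive x r)).
Proof.
  destruct gamma_legendrian as [HC HL].
  apply filter_imp with (2 := in_interval_locally a b s s_in). intros r Hr.
  destruct (HC r Hr) as (Dx & _ & Dy & _ & Du & _).
  now repeat split; try apply HL.
Qed.

(* The horizontality of [gamma] cancels the first-order terms of the derivative. *)
Lemma is_derive_vertical_gap :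
  locally 0 (fun c => is_derive vertical_gap c (vertical_gap' c)).
Proof.
  generalize (filterlim_shift s _ legendrian_near). unfold filtermap. apply filter_imp.
  intros c (Dx & Dy & Du & Hu).
  change vertical_gap with
    (fun h => - u (s + h) + u s - / 2 * (- y (s + h) * x s - - x (s + h) * y s)).
  unfold vertical_gap'. clearbody x y u.
  auto_derive; [now repeat split |].
  change (fun r => x r) with x; change (fun r => y r) with y; change (fun r => u r) with u.
  rewrite Hu. ring.
Qed.

Lemma vertical_gap'_ratio_lim :
  filterlim (fun c => vertical_gap' c / c) (within (fun c => c <> 0) (locally 0)) (locally 0).
Proof.
  destruct gamma_legendrian as [HC _].
  destruct (HC s s_in) as (Dx & Cx & Dy & Cy & _).
  assert (Hderiv : forall f, continuous (Derive f) s ->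
    filterlim (fun c => Derive f (s + c)) (within (fun c => c <> 0) (locally 0))
      (locally (Derive f s))).
  { intros f Cf. eapply filterlim_filter_le_1; [apply filter_le_within |].
    eapply filterlim_comp; [apply filterlim_shift | exact Cf]. }
  assert (Hlim : filterlim (fun c =>
      - / 2 * (Derive y (s + c) * ((x (s + c) - x s) / c)
               - Derive x (s + c) * ((y (s + c) - y s) / c)))
      (within (fun c => c <> 0) (locally 0))
      (locally (- / 2 * (Derive y s * Derive x s - Derive x s * Derive y s)))).
  { apply lim_Rmult; [apply filterlim_const |].
    apply lim_Rplus; [| apply lim_Ropp]; apply lim_Rmult;
      auto using is_derive_diff_quotient, Derive_correct. }
  replace (- / 2 * _) with 0 in Hlim by ring.
  apply filterlim_within_ext with (2 := Hlim).
  intros c Hc. unfold vertical_gap'. field. exact Hc.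
Qed.

Lemma vertical_gap_little_o :
  filterlim (fun h => vertical_gap h / h ^ 2) (within (fun h => h <> 0) (locally 0))
    (locally 0).
Proof.
  apply little_o_sq_of_deriv with (W' := vertical_gap').
  - unfold vertical_gap, hmul, hinv, hu, hx, hy; simpl. rewrite Rplus_0_r. ring.
  - unfold vertical_gap'. rewrite Rplus_0_r. ring.
  - exact is_derive_vertical_gap.
  - exact vertical_gap'_ratio_lim.
Qed.

Lemma A_inv_shift_quotient_lim :
  filterlim (fun h => Cdiv (Afun (hmul (hinv (gamma (s + h))) (gamma s))) (RtoC (h ^ 2)))
    (within (fun h => h <> 0) (locally 0)) (locally (RtoC (hspeed gamma s ^ 2))).
Proof.
  destruct gamma_legendrian as [HC _].
  destruct (HC s s_in) as (Dx & _ & Dy & _).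
  apply filterlim_within_ext with (f := fun h =>
    (((x (s + h) - x s) / h) ^ 2 + ((y (s + h) - y s) / h) ^ 2,
     - (4 * (vertical_gap h / h ^ 2)))).
  { intros h Hh.
    unfold vertical_gap, x, y, Afun, hmul, hinv, hx, hy, hu, Cdiv, Cmult, Cinv, RtoC; simpl.
    apply injective_projections; simpl; field; exact Hh. }
  apply lim_C_parts.
  - unfold hspeed. rewrite pow2_sqrt by (apply Rplus_le_le_0_compat; apply pow2_ge_0).
    apply lim_Rplus; apply lim_Rpow; apply is_derive_diff_quotient, Derive_correct; assumption.
  - change (Im (RtoC (hspeed gamma s ^ 2))) with 0.
    pose proof (lim_Ropp _ _ (lim_Rmult _ _ 4 0 (filterlim_const 4) vertical_gap_little_o))
      as Him.
    now rewrite Rmult_0_r, Ropp_0 in Him.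
Qed.

End LegendrianGerm.

Lemma A_inv_shift_continuous (a b : Rbar) (gamma : R -> Hpt) (t : R) (P : Hpt) :
  C1_curve a b gamma -> in_interval a b t ->
  filterlim (fun h => Afun (hmul (hinv (gamma (t + h))) P)) (locally 0)
    (locally (Afun (hmul (hinv (gamma t)) P))).
Proof.
  intros HC Ht. destruct (HC t Ht) as (Dx & _ & Dy & _ & Du & _).
  refine (filterlim_comp _ _ _ (fun h => t + h) (fun r => Afun (hmul (hinv (gamma r)) P))
            _ (locally t) _ (filterlim_shift t) _).
  pose (x := fun r => hx (gamma r)). pose (y := fun r => hy (gamma r)).
  pose (u := fun r => hu (gamma r)).
  change (ex_derive x t) in Dx. change (ex_derive y t) in Dy. change (ex_derive u t) in Du.
  change (fun r => Afun (hmul (hinv (gamma r)) P)) with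
    (fun r => ((- x r + hx P) ^ 2 + (- y r + hy P) ^ 2,
               - (4 * (- u r + hu P - / 2 * (- y r * hx P - - x r * hy P))))).
  change (Afun (hmul (hinv (gamma t)) P)) with
    ((- x t + hx P) ^ 2 + (- y t + hy P) ^ 2,
     - (4 * (- u t + hu P - / 2 * (- y t * hx P - - x t * hy P)))).
  clearbody x y u.
  apply lim_C_parts; apply (@ex_derive_continuous R_AbsRing R_NormedModule);
    simpl; auto_derive; now repeat split.
Qed.

Lemma hinv_hmul_hinv (p q : Hpt) : hinv (hmul (hinv p) q) = hmul (hinv q) p.
Proof.
  unfold hinv, hmul, hx, hy, hu; simpl. f_equal; [f_equal |]; ring.
Qed.

Lemma Afun_hinv (p : Hpt) : Afun (hinv p) = Cconj (Afun p).
Proof.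
  unfold Afun, hinv, Cconj, hx, hy, hu; simpl. f_equal; ring.
Qed.

Lemma koranyi_Cmod (p : Hpt) : koranyi p = sqrt (Cmod (Afun p)).
Proof.
  unfold koranyi, Cmod, Afun; simpl. do 2 f_equal. ring.
Qed.

Lemma Afun_eq0 (p : Hpt) : Afun p = 0%C -> p = ((0, 0), 0).
Proof.
  destruct p as [[x y] u]. unfold Afun, hx, hy, hu; simpl. intros E.
  injection E as Exy Eu.
  assert (x = 0) by nra. assert (y = 0) by nra. assert (u = 0) by lra.
  now subst.
Qed.

Lemma hmul_hinv_eq_id (p q : Hpt) : hmul (hinv p) q = ((0, 0), 0) -> p = q.
Proof.
  destruct p as [[x1 y1] u1], q as [[x2 y2] u2].
  unfold hmul, hinv, hx, hy, hu; simpl. intros E. injection E as Ex Ey Eu.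
  assert (x2 = x1) by lra. assert (y2 = y1) by lra. subst x2 y2.
  f_equal. nra.
Qed.

Lemma Afun_swap_mult (p q : Hpt) :
  Cmult (Afun (hmul (hinv q) p)) (Afun (hmul (hinv p) q)) =
  RtoC (Cmod (Afun (hmul (hinv p) q)) ^ 2).
Proof.
  rewrite <- hinv_hmul_hinv, Afun_hinv, Cmod2_alt.
  set (z := Afun (hmul (hinv p) q)). destruct z as [z1 z2].
  unfold Cconj, Cmult, RtoC; simpl. f_equal; ring.
Qed.

Lemma cross_ratio_div_sq (p1 p2 p3 p4 : Hpt) (e1 e2 : R) : e1 <> 0 -> e2 <> 0 ->
  Cdiv (cross_ratio p1 p2 p3 p4) (RtoC (e1 ^ 2 * e2 ^ 2)) =
  Cmult (Cmult (Cdiv (Afun (hmul (hinv p3) p1)) (RtoC (e1 ^ 2)))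
               (Cdiv (Afun (hmul (hinv p4) p2)) (RtoC (e2 ^ 2))))
        (Cinv (Cmult (Afun (hmul (hinv p4) p1)) (Afun (hmul (hinv p3) p2)))).
Proof.
  intros H1 H2. unfold cross_ratio, Cdiv.
  generalize (Cinv (Cmult (Afun (hmul (hinv p4) p1)) (Afun (hmul (hinv p3) p2)))).
  intros w. rewrite RtoC_mult.
  assert (RtoC (e1 ^ 2) <> 0%C) by (intros E; apply RtoC_inj in E; revert E; now apply pow_nonzero).
  assert (RtoC (e2 ^ 2) <> 0%C) by (intros E; apply RtoC_inj in E; revert E; now apply pow_nonzero).
  field. now split.
Qed.

Lemma Afun_hmul_hinv_neq0 (p q : Hpt) : p <> q -> Afun (hmul (hinv p) q) <> 0%C.
Proof.
  intros Hpq E. apply Hpq, hmul_hinv_eq_id, Afun_eq0, E.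
Qed.

Lemma cross_ratio_limit_value (p q : Hpt) (vp vq : R) : p <> q ->
  Cmult (Cmult (RtoC (vp ^ 2)) (RtoC (vq ^ 2)))
        (Cinv (Cmult (Afun (hmul (hinv q) p)) (Afun (hmul (hinv p) q)))) =
  RtoC (((vp * vq) / koranyi (hmul (hinv p) q) ^ 2) ^ 2).
Proof.
  intros Hpq.
  assert (HA : Cmod (Afun (hmul (hinv p) q)) <> 0).
  { intros E. now apply (Afun_hmul_hinv_neq0 p q Hpq), Cmod_eq_0. }
  rewrite Afun_swap_mult, koranyi_Cmod, pow2_sqrt by apply Cmod_ge_0.
  rewrite <- RtoC_inv, <- !RtoC_mult by now apply pow_nonzero.
  f_equal. field. exact HA.
Qed.

Lemma filterlim_fst_within (D1 D2 : R -> Prop) (x y : R) :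
  filterlim fst (within (fun d => D1 (fst d) /\ D2 (snd d)) (locally (x, y)))
    (within D1 (locally x)).
Proof.
  intros P [e He]. exists e. intros [d1 d2] [B1 _] [N1 _]. now apply He.
Qed.

Lemma filterlim_snd_within (D1 D2 : R -> Prop) (x y : R) :
  filterlim snd (within (fun d => D1 (fst d) /\ D2 (snd d)) (locally (x, y)))
    (within D2 (locally y)).
Proof.
  intros P [e He]. exists e. intros [d1 d2] [_ B2] [_ N2]. now apply He.
Qed.

Theorem proposition6p1 (a b : Rbar) (gamma : R -> Hpt) (s t : R) :
  legendrian a b gamma ->
  in_interval a b s -> in_interval a b t ->
  s <> t -> gamma s <> gamma t ->
  filterlim
    (fun d : R * R =>
       Cdiv (cross_ratio (gamma s) (gamma t) (gamma (s + fst d)) (gamma (t + snd d)))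
            (RtoC ((fst d) ^ 2 * (snd d) ^ 2)))
    (within (fun d : R * R => fst d <> 0 /\ snd d <> 0) (locally (0, 0)))
    (locally (RtoC (((hspeed gamma s * hspeed gamma t)
                      / (koranyi (hmul (hinv (gamma s)) (gamma t))) ^ 2) ^ 2))).
Proof.
  intros HL Hs Ht _ Hne.
  pose proof (filterlim_fst_within (fun h => h <> 0) (fun h => h <> 0) 0 0) as Hfst.
  pose proof (filterlim_snd_within (fun h => h <> 0) (fun h => h <> 0) 0 0) as Hsnd.
  pose proof (@filter_le_within R (locally 0) _ (fun h : R => h <> 0)) as Hle.
  pose proof (filterlim_filter_le_2 _ Hle Hfst) as Hfst0.
  pose proof (filterlim_filter_le_2 _ Hle Hsnd) as Hsnd0.
  apply filterlim_within_ext with (f := fun d => Cmult (Cmult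
      (Cdiv (Afun (hmul (hinv (gamma (s + fst d))) (gamma s))) (RtoC (fst d ^ 2)))
      (Cdiv (Afun (hmul (hinv (gamma (t + snd d))) (gamma t))) (RtoC (snd d ^ 2))))
      (Cinv (Cmult (Afun (hmul (hinv (gamma (t + snd d))) (gamma s)))
                   (Afun (hmul (hinv (gamma (s + fst d))) (gamma t)))))).
  { intros d [H1 H2]. symmetry. now apply cross_ratio_div_sq. }
  rewrite <- (cross_ratio_limit_value _ _ _ _ Hne).
  apply lim_Cmult; [apply lim_Cmult | apply lim_Cinv].
  - exact (filterlim_comp _ _ _ _ _ _ _ _ Hfst (A_inv_shift_quotient_lim a b gamma s HL Hs)).
  - exact (filterlim_comp _ _ _ _ _ _ _ _ Hsnd (A_inv_shift_quotient_lim a b gamma t HL Ht)).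
  - apply Cmult_neq_0; apply Afun_hmul_hinv_neq0; congruence.
  - destruct HL as [HC _]. apply lim_Cmult.
    + exact (filterlim_comp _ _ _ _ _ _ _ _ Hsnd0 (A_inv_shift_continuous a b gamma t _ HC Ht)).
    + exact (filterlim_comp _ _ _ _ _ _ _ _ Hfst0 (A_inv_shift_continuous a b gamma s _ HC Hs)).
Qed.
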